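(* Let $n,N\in\mathbb N$, $I=\{1,\dots,n\}$, $J=\{1,\dots,N\}$, and let $a=(a_{ij})\in\mathbb R^{n\times N}$. Let $G$ be a nonempty finite set of maps from $I$ to $J$, and let $C_G>0$ be a constant depending only on $G$. Assume that for all $i\in I$, $j\in J$ and all pairs $(i_1,j_1)\neq(i_2,j_2)$ in $I\times J$: (i) $\mathbb P(\{g\in G: g(i)=j\})=1/N$; (ii) $\mathbb P(\{g\in G: g(i_1)=j_1,\ g(i_2)=j_2\})\le C_G/N^2$. Then for every integer $1\le \ell\le n$, $$\frac{c}{N}\sum_{j=1}^{\ell N}s(j)\;\le\;\int_G\sum_{k=1}^{\ell}\operatorname{k\text{-}max}_{1\le i\le n}|a_{i g(i)}|\,d\mathbb P(g)\;\le\;\frac{2}{N}\sum_{j=1}^{\ell N}s(j),$$ where $c=2^{-5}(1+2C_G)^{-2}$.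
   Context: $\mathbb P$ denotes the normalized counting measure on $G$, i.e. $\mathbb P(E)=|E|/|G|$ for $E\subseteq G$. $(s(k))_{k=1}^{nN}$ is the non-increasing rearrangement of the $nN$ numbers $(|a_{ij}|)_{i\in I,j\in J}$ (so $s(1)$ is the largest). For a vector $x\in\mathbb R^n$ with non-negative entries, $\operatorname{k\text{-}max}_{1\le i\le n}x_i$ denotes the $k$-th largest entry of $x$ counted with multiplicity, i.e. the $k$-th entry of the non-increasing rearrangement of $x$. *)

(* Reals are modelled by an arbitrary realFieldType R
   (the statement is purely order-algebraic). *)
From HB Require Import structures.
From mathcomp Require Import all_boot all_order all_algebra.
Set Implicit Arguments. Unset Strict Implicit. Unset Printing Implicit Defensive.
Import Order.TTheory GRing.Theory Num.Theory.
Local Open Scope ring_scope.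

Definition decr_sort (R : realFieldType) (s : seq R) : seq R :=
  sort (fun x y : R => y <= x) s.

(* k-max (k is 1-based): the k-th largest entry counted with multiplicity *)
Definition kmax (R : realFieldType) (k : nat) (s : seq R) : R :=
  nth 0 (decr_sort s) k.-1.

(* s(k), 1-based: the non-increasing rearrangement of (|a_ij|)_{i,j} *)
Definition srearr (R : realFieldType) (n N : nat) (a : 'M[R]_(n, N)) (k : nat) : R :=
  nth 0 (decr_sort [seq `|a p.1 p.2| | p : 'I_n * 'I_N]) k.-1.

Definition Prob (n N : nat) (R : realFieldType)
  (G : {set {ffun 'I_n -> 'I_N}}) (E : {set {ffun 'I_n -> 'I_N}}) : R :=
  #|E|%:R / #|G|%:R.

Definition integral (n N : nat) (R : realFieldType)
  (G : {set {ffun 'I_n -> 'I_N}}) (f : {ffun 'I_n -> 'I_N} -> R) : R :=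
  (\sum_(g in G) f g) / #|G|%:R.

From HB Require Import structures.
From mathcomp Require Import all_boot all_order all_algebra.
From mathcomp Require Import ring lra.
Set Implicit Arguments. Unset Strict Implicit. Unset Printing Implicit Defensive.
Import Order.TTheory GRing.Theory Num.Theory.
Local Open Scope ring_scope.

(* Let A be the set of the l*N largest cells |a_ij| and tau a threshold
   separating A from the other cells.  For g in G let K g be the number of
   rows i with (i, g i) in A and X g the total weight of these hits; by (i)
   the mean of X is S/N, and by (i) and (ii) the mean of K X is at most
   (S/N) (1 + l C_G).
   Upper bound: the l largest |a_{i g(i)}| sum to at most X g + l tau, and
   l N tau <= S.
   Lower bound: the l largest entries among the K g hits carry at least
   min(1, l / K g) X g >= (2t - t^2 K g / l) X g, a bound affine in K g whose
   mean is controlled by the two moments above; t = 1/(2(1 + 2 C_G)) gives c. *)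

Definition top_sum (R : realFieldType) (T : finType) (v : T -> R) (m : nat) : R :=
  \sum_(k < m) nth 0 (decr_sort (map v (enum T))) k.

Lemma sum_indicator (R : realFieldType) (T : finType) (A : {pred T}) (P : pred T) :
  \sum_(x in A) (P x)%:R = #|[set x in A | P x]|%:R :> R.
Proof.
rewrite -natr_sum -sum1_card; congr _%:R.
rewrite big_mkcond [RHS]big_mkcond; apply: eq_bigr => x _.
by rewrite inE; case: (x \in A); case: (P x).
Qed.

Lemma sum_mulr_indicator (R : realFieldType) (T : finType) (B : {pred T})
    (F : T -> R) :
  \sum_x (x \in B)%:R * F x = \sum_(x in B) F x.
Proof.
by rewrite [RHS]big_mkcond; apply: eq_bigr => x _; case: (x \in B); rewrite ?mul1r ?mul0r.
Qed.

Lemma sum_indicator_card (R : realFieldType) (T : finType) (B : {pred T}) :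
  \sum_x (x \in B)%:R = #|B|%:R :> R.
Proof.
by rewrite -[RHS]sumr_const -(sum_mulr_indicator B); under [RHS]eq_bigr do rewrite mulr1.
Qed.

Section TopSum.

Variables (R : realFieldType) (T : finType) (v : T -> R).

Lemma top_sum_set m : (m <= #|T|)%N ->
  exists B : {set T}, [/\ #|B| = m, top_sum v m = \sum_(x in B) v x &
    forall x y, x \notin B -> y \in B -> v x <= v y].
Proof.
move=> le_mT; set r := relpre v (fun x y : R => y <= x).
set e := sort r (enum T).
have e_uniq : uniq e by rewrite sort_uniq enum_uniq.
have size_e : size e = #|T| by rewrite size_sort cardE.
have size_take_e : size (take m e) = m.
  by rewrite size_take size_e; case: ltnP => // le_Tm; apply/eqP; rewrite eqn_leq le_Tm.
exists [set x in take m e]; split.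
- by rewrite cardsE (card_uniqP (take_uniq m e_uniq)).
- rewrite (eq_bigl (mem (take m e))) => [|x]; last by rewrite inE.
  rewrite -big_uniq ?take_uniq // -[RHS](big_map v xpredT id) (big_nth 0).
  rewrite size_map size_take_e big_mkord /top_sum /decr_sort sort_map -/e.
  by apply: eq_bigr => k _; rewrite map_take nth_take.
- have r_trans : transitive r by move=> x y z /= h1 h2; apply: le_trans h2 h1.
  have : pairwise r (take m e ++ drop m e).
    by rewrite cat_take_drop -sorted_pairwise ?sort_sorted // => x y; apply: le_total.
  rewrite pairwise_cat => /and3P [/allrelP r_take_drop _ _] x y.
  rewrite !inE => x_notin y_in; apply: r_take_drop => //.
  have : x \in e by rewrite mem_sort mem_enum.
  by rewrite -{1}(cat_take_drop m e) mem_cat (negbTE x_notin).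
Qed.

Hypothesis v_ge0 : forall x, 0 <= v x.

Lemma top_sum_threshold m : (m <= #|T|)%N ->
  exists B : {set T}, exists2 tau : R,
    [/\ #|B| = m, top_sum v m = \sum_(x in B) v x & 0 <= tau] &
    (forall x, x \notin B -> v x <= tau) /\ (forall x, x \in B -> tau <= v x).
Proof.
move=> /top_sum_set [B [card_B top_B B_top]].
exists B, (\big[Num.max/0]_(x | x \notin B) v x).
  split=> //; apply: (big_ind (fun y => 0 <= y)) => // y z y_ge0 z_ge0.
  by rewrite le_max y_ge0.
split=> [x x_notin | y y_in]; first exact: le_bigmax_cond.
by apply: bigmax_le => // x x_notin; apply: B_top.
Qed.

(* Since [tau] separates [B] from its complement, each summand of
   [\sum_x (lam x - 1_B x) * v x] is at most [(lam x - 1_B x) * tau]. *)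
Lemma top_sum_ge_fractional (lam : T -> R) m : (m <= #|T|)%N ->
  (forall x, 0 <= lam x <= 1) -> \sum_x lam x <= m%:R ->
  \sum_x lam x * v x <= top_sum v m.
Proof.
move=> /top_sum_threshold [B [tau [card_B -> tau_ge0] [off_B on_B]]] lam01 sum_lam.
have termwise x : (lam x - (x \in B)%:R) * v x <= (lam x - (x \in B)%:R) * tau.
  have /andP [lam_ge0 lam_le1] := lam01 x.
  case: (boolP (x \in B)) => [x_in | x_notin]; last by rewrite subr0 ler_wpM2l ?off_B.
  by rewrite ler_wnM2l ?on_B // subr_le0.
have : \sum_x lam x * v x - \sum_(x in B) v x <= (\sum_x lam x - m%:R) * tau.
  rewrite -sum_mulr_indicator -card_B -sum_indicator_card -!sumrB mulr_suml.
  by apply: ler_sum => x _; rewrite -!mulrBl termwise.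
move=> /le_trans le_lam; rewrite -subr_le0; apply: le_lam.
by rewrite mulr_le0_ge0 // subr_le0.
Qed.

Lemma top_sum_ge0 m : (m <= #|T|)%N -> 0 <= top_sum v m.
Proof. by move=> /top_sum_set [B [_ -> _]]; apply: sumr_ge0. Qed.

Lemma top_sum_ge_scaled (B : {set T}) r m : (m <= #|T|)%N ->
  r <= 1 -> r * #|B|%:R <= m%:R -> r * \sum_(x in B) v x <= top_sum v m.
Proof.
move=> le_mT r_le1 rB_le; have [r_lt0 | r_ge0] := ltP r 0.
  apply: le_trans (top_sum_ge0 le_mT).
  by rewrite nmulr_rle0 // sumr_ge0.
rewrite -sum_mulr_indicator mulr_sumr.
under eq_bigr do rewrite mulrA.
apply: top_sum_ge_fractional => // [x|]; last by rewrite -mulr_sumr sum_indicator_card.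
by case: (x \in B); rewrite ?mulr1 ?mulr0 ?r_ge0 ?r_le1 ?lexx // ler01.
Qed.

Lemma top_sum_le_threshold (D : {set T}) tau m : (m <= #|T|)%N -> 0 <= tau ->
  (forall x, x \notin D -> v x <= tau) ->
  top_sum v m <= \sum_(x in D) v x + m%:R * tau.
Proof.
move=> /top_sum_set [B [card_B -> _]] tau_ge0 off_D.
rewrite (big_setID D) /=; apply: lerD.
  rewrite [leRHS](big_setID B) /= setIC lerDl.
  by apply: sumr_ge0 => x _; apply: v_ge0.
apply: (@le_trans _ _ (\sum_(x in B :\: D) tau)).
  by apply: ler_sum => x; rewrite inE => /andP [x_notin _]; apply: off_D.
rewrite sumr_const -card_B mulr_natl; apply: ler_wpMn2l => //.
by apply/subset_leq_card/subsetDl.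
Qed.

End TopSum.

Definition graph_hits (n N : nat) (g : {ffun 'I_n -> 'I_N}) (A : {set 'I_n * 'I_N}) :
  {set 'I_n} := [set i | (i, g i) \in A].

Lemma sum_graph_hits (R : realFieldType) (n N : nat) (g : {ffun 'I_n -> 'I_N})
    (A : {set 'I_n * 'I_N}) (h : 'I_n * 'I_N -> R) :
  \sum_(p in A) (g p.1 == p.2)%:R * h p = \sum_(i in graph_hits g A) h (i, g i).
Proof.
rewrite big_mkcond /=; transitivity (\sum_i \sum_j
  (if (i, j) \in A then (g i == j)%:R * h (i, j) else 0)).
  by rewrite pair_bigA; apply: eq_bigr => -[i j].
rewrite [RHS]big_mkcond /=; apply: eq_bigr => i _.
rewrite (bigD1 (g i)) //= eqxx mul1r inE big1 ?addr0 // => j g_neq_j.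
by rewrite eq_sym (negbTE g_neq_j) mul0r; case: ifP.
Qed.

Section Sampling.

Variables (R : realFieldType) (n N : nat) (G : {set {ffun 'I_n -> 'I_N}}) (CG : R).
Hypothesis G_neq0 : G != set0.
Hypothesis prob_hit : forall (i : 'I_n) (j : 'I_N),
  Prob R G [set g in G | g i == j] = 1 / N%:R.
Hypothesis prob_hit2 : forall (i1 i2 : 'I_n) (j1 j2 : 'I_N), (i1, j1) != (i2, j2) ->
  Prob R G [set g in G | (g i1 == j1) && (g i2 == j2)] <= CG / (N%:R ^+ 2).
Hypothesis CG_ge0 : 0 <= CG.

Local Notation nG := (#|G|%:R : R).

Lemma card_G_gt0 : 0 < nG.
Proof. by rewrite ltr0n card_gt0. Qed.

Lemma N_gt0 : (0 < n)%N -> (0 < N)%N.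
Proof.
move=> n_gt0; have [g _] := set0Pn _ G_neq0.
exact: leq_ltn_trans (ltn_ord (g (Ordinal n_gt0))).
Qed.

Lemma sum_hit i j : \sum_(g in G) (g i == j)%:R = nG / N%:R.
Proof.
have nG_neq0 : nG != 0 by rewrite gt_eqF ?card_G_gt0.
move: (prob_hit i j); rewrite /Prob sum_indicator => /(congr1 ( *%R^~ nG)).
by rewrite mulfVK // mul1r mulrC.
Qed.

Lemma sum_hit2 (p q : 'I_n * 'I_N) : p != q ->
  \sum_(g in G) (g p.1 == p.2)%:R * (g q.1 == q.2)%:R <= CG / N%:R ^+ 2 * nG.
Proof.
move=> p_neq_q; under eq_bigr do rewrite -natrM mulnb.
rewrite sum_indicator -ler_pdivrMr ?card_G_gt0 //.
by apply: prob_hit2; case: p p_neq_q; case: q.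
Qed.

Lemma sum_hits_weight (v : 'I_n * 'I_N -> R) (A : {set 'I_n * 'I_N}) :
  \sum_(g in G) \sum_(i in graph_hits g A) v (i, g i) =
  (\sum_(p in A) v p) * (nG / N%:R).
Proof.
under eq_bigr do rewrite -sum_graph_hits.
rewrite exchange_big mulr_suml; apply: eq_bigr => p _.
by rewrite -mulr_suml sum_hit mulrC.
Qed.

Lemma sum_card_hits_weight (v : 'I_n * 'I_N -> R) (A : {set 'I_n * 'I_N}) :
  (forall p, 0 <= v p) ->
  \sum_(g in G) #|graph_hits g A|%:R * \sum_(i in graph_hits g A) v (i, g i) <=
  (\sum_(p in A) v p) * (nG / N%:R + #|A|%:R * (CG / N%:R ^+ 2 * nG)).
Proof.
move=> v_ge0; set hit := fun (g : {ffun 'I_n -> 'I_N}) (p : 'I_n * 'I_N) =>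
  (g p.1 == p.2)%:R : R.
have card_hits g : #|graph_hits g A|%:R = \sum_(q in A) hit g q.
  rewrite -sumr_const -(sum_graph_hits g A (fun _ => 1)).
  by under eq_bigr do rewrite mulr1.
under eq_bigr do rewrite card_hits -sum_graph_hits mulr_sumr.
rewrite exchange_big mulr_suml; apply: ler_sum => p p_in.
rewrite (eq_bigr (fun g => v p * \sum_(q in A) hit g p * hit g q)); last first.
  by move=> g _; rewrite mulr_suml mulr_sumr; apply: eq_bigr => q _; ring.
rewrite -mulr_sumr ler_wpM2l // exchange_big (bigD1 p) //=; apply: lerD.
  by under eq_bigr do rewrite /hit -natrM mulnb andbb; rewrite sum_hit.
apply: (@le_trans _ _ (\sum_(q in A | q != p) CG / N%:R ^+ 2 * nG)).
  by apply: ler_sum => q /andP [_ q_neq_p]; apply: sum_hit2; rewrite eq_sym.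
rewrite mulr_natl -(@sumr_const _ _ (mem A)) [leRHS](bigD1 p) //= lerDr.
by rewrite mulr_ge0 ?divr_ge0 ?exprn_ge0 ?(ltW card_G_gt0).
Qed.

Variables (v : 'I_n * 'I_N -> R) (l : nat).
Hypothesis v_ge0 : forall p, 0 <= v p.
Hypotheses (l_gt0 : (0 < l)%N) (l_le_n : (l <= n)%N).

Local Notation S := (top_sum v (l * N)).
Local Notation W g := (top_sum (fun i => v (i, g i)) l).

Lemma top_cells : exists A : {set 'I_n * 'I_N}, exists2 tau : R,
    [/\ #|A| = (l * N)%N, S = \sum_(p in A) v p & 0 <= tau] &
    (forall p, p \notin A -> v p <= tau) /\ (forall p, p \in A -> tau <= v p).
Proof.
by apply: top_sum_threshold; rewrite // card_prod !card_ord leq_mul2r l_le_n orbT.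
Qed.

Lemma sum_top_sum_le : \sum_(g in G) W g <= 2 / N%:R * S * nG.
Proof.
have N_pos : 0 < N%:R :> R by rewrite ltr0n N_gt0 // (leq_trans l_gt0).
have [A [tau [card_A top_A tau_ge0] [off_A on_A]]] := top_cells.
have W_le (g : {ffun 'I_n -> 'I_N}) :
    W g <= \sum_(i in graph_hits g A) v (i, g i) + l%:R * tau.
  apply: top_sum_le_threshold; rewrite ?card_ord // => i.
  by rewrite inE; apply: off_A.
have tau_le : l%:R * tau <= S / N%:R.
  rewrite top_A ler_pdivlMr // mulrAC -natrM -card_A mulr_natl -sumr_const.
  by apply: ler_sum => p; apply: on_A.
apply: le_trans (ler_sum _ (fun g _ => W_le g)) _.
rewrite big_split /= sum_hits_weight -top_A sumr_const -[_ *+ #|G|]mulr_natr.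
have := ler_wpM2r (ltW card_G_gt0) tau_le; lra.
Qed.

Lemma sum_top_sum_ge t : 0 <= t <= 2^-1 ->
  (2 * t - t ^+ 2 / l%:R - t ^+ 2 * CG) * (S * (nG / N%:R)) <= \sum_(g in G) W g.
Proof.
move=> /andP [t_ge0 t_le_half].
have N_pos : 0 < N%:R :> R by rewrite ltr0n N_gt0 // (leq_trans l_gt0).
have L_pos : 0 < l%:R :> R by rewrite ltr0n.
have [A [tau [card_A top_A _] _]] := top_cells.
set L := l%:R in L_pos *.
have W_ge (g : {ffun 'I_n -> 'I_N}) :
    2 * t * \sum_(i in graph_hits g A) v (i, g i) - t ^+ 2 / L *
    (#|graph_hits g A|%:R * \sum_(i in graph_hits g A) v (i, g i)) <= W g.
  set K := #|_|%:R; rewrite mulrA -mulrBl.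
  apply: top_sum_ge_scaled; rewrite ?card_ord //.
    have := mulr_ge0 (divr_ge0 (sqr_ge0 t) (ltW L_pos)) (ler0n _ #|graph_hits g A|).
    lra.
  rewrite -/L; have -> : (2 * t - t ^+ 2 / L * K) * K = L - (L - t * K) ^+ 2 / L.
    by field; rewrite gt_eqF.
  by rewrite lerBlDr lerDl divr_ge0 ?sqr_ge0 ?ltW.
apply: le_trans (ler_sum _ (fun g _ => W_ge g)).
rewrite sumrB -!mulr_sumr sum_hits_weight -top_A.
have := ler_wpM2l (_ : 0 <= t ^+ 2 / L) (sum_card_hits_weight A v_ge0).
rewrite -top_A card_A natrM -/L => /(_ (divr_ge0 (sqr_ge0 t) (ltW L_pos))).
have -> : t ^+ 2 / L * (S * (nG / N%:R + L * N%:R * (CG / N%:R ^+ 2 * nG))) =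
          (t ^+ 2 / L + t ^+ 2 * CG) * (S * (nG / N%:R)).
  by field; rewrite !gt_eqF.
lra.
Qed.

Lemma sum_top_sum_ge_const :
  ((2 : R) ^+ 5)^-1 * ((1 + 2 * CG) ^+ 2)^-1 / N%:R * S * nG <= \sum_(g in G) W g.
Proof.
have CG0 := CG_ge0; set t := (2 * (1 + 2 * CG))^-1.
have N_pos : 0 < N%:R :> R by rewrite ltr0n N_gt0 // (leq_trans l_gt0).
have t_pos : 0 < t by rewrite invr_gt0; lra.
have tE : t * (1 + 2 * CG) = 2^-1 by rewrite /t; field; lra.
have -> : ((2 : R) ^+ 5)^-1 * ((1 + 2 * CG) ^+ 2)^-1 / N%:R * S * nG =
          t ^+ 2 / 8 * (S * (nG / N%:R)).
  by rewrite /t; field; lra.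
have L_ge1 : 1 <= l%:R :> R by rewrite ler1n.
have tL : t ^+ 2 / l%:R <= t ^+ 2.
  by rewrite ler_pdivrMr ?ler_peMr ?sqr_ge0 //; lra.
have tC : 0 <= t * CG := mulr_ge0 (ltW t_pos) CG0.
apply: le_trans (sum_top_sum_ge (t := t) _); last by apply/andP; split; lra.
have S_ge0 : 0 <= S by have [A [_ [_ -> _] _]] := top_cells; apply: sumr_ge0.
apply: ler_wpM2r; last by nra.
exact: mulr_ge0 S_ge0 (divr_ge0 (ltW card_G_gt0) (ler0n _ _)).
Qed.

End Sampling.

Lemma sum_kmax (R : realFieldType) (T : finType) (v : T -> R) (m : nat) :
  \sum_(1 <= k < m.+1) kmax k (map v (enum T)) = top_sum v m.
Proof. by rewrite big_add1 big_mkord. Qed.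

Lemma sum_srearr (R : realFieldType) (n N : nat) (a : 'M[R]_(n, N)) (m : nat) :
  \sum_(1 <= k < m.+1) srearr a k = top_sum (fun p => `|a p.1 p.2|) m.
Proof. by rewrite big_add1 big_mkord. Qed.

Theorem theorem1p1 (R : realFieldType) (n N : nat) (a : 'M[R]_(n, N))
  (G : {set {ffun 'I_n -> 'I_N}}) (CG : R)
  (HG : G != set0) (HC : 0 < CG)
  (H1 : forall (i : 'I_n) (j : 'I_N),
      Prob R G [set g in G | g i == j] = 1 / N%:R)
  (H2 : forall (i1 i2 : 'I_n) (j1 j2 : 'I_N), (i1, j1) != (i2, j2) ->
      Prob R G [set g in G | (g i1 == j1) && (g i2 == j2)] <= CG / (N%:R ^+ 2))
  (l : nat) (Hl1 : (1 <= l)%N) (Hln : (l <= n)%N) :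
  let c := ((2 : R) ^+ 5)^-1 * ((1 + 2 * CG) ^+ 2)^-1 in
  let I := integral G (fun g => \sum_(1 <= k < l.+1)
                         kmax k [seq `|a i (g i)| | i <- enum 'I_n]) in
  let S := \sum_(1 <= j < (l * N).+1) srearr a j in
  c / N%:R * S <= I /\ I <= 2 / N%:R * S.
Proof.
move=> c I S.
have nG_pos := card_G_gt0 R HG.
rewrite /I /integral /S sum_srearr; under eq_bigr do rewrite sum_kmax.
split; rewrite ?ler_pdivlMr ?ler_pdivrMr //.
  exact: (sum_top_sum_ge_const HG H1 H2 (ltW HC) (v := fun p => `|a p.1 p.2|)).
exact: (sum_top_sum_le HG H1 (v := fun p => `|a p.1 p.2|)).
Qed.
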